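(* Let $A$ be a finite skew brace and let $\Lambda(x_1),\dots,\Lambda(x_k)$ be its $\lambda$-orbits of size greater than $1$. Then \[A^2=\Big\langle \bigcup_{i=1}^k\big(\Lambda(x_i)-\Lambda(x_i)\big)\Big\rangle_+,\] where $\Lambda(x_i)-\Lambda(x_i)=\{u-v: u,v\in\Lambda(x_i)\}$ and $\langle\cdot\rangle_+$ denotes the generated subgroup of $(A,+)$. In particular $|A^2|\ge|\Lambda(x_i)|$ for all $i$.
   Context: A skew brace is a triple $(A,+,\circ)$ where $(A,+)$ and $(A,\circ)$ are groups with $a\circ(b+c)=a\circ b-a+a\circ c$ for all $a,b,c$. $\lambda_a(b)=-a+a\circ b$; the $\lambda$-orbit of $x$ is $\Lambda(x)=\{\lambda_a(x):a\in A\}$. $A^2$ is the subgroup of $(A,+)$ generated by all $a*b=\lambda_a(b)-b$, $a,b\in A$. *)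

(* The additive group (A,+) of a finite skew brace is modelled
   as a finGroupType gT, whose (multiplicative) group law mulg plays the role
   of +; the inverse x^-1 is -x and 1 is 0.  The second operation \circ is an
   explicit binary operation on gT. *)
From HB Require Import structures.
From mathcomp Require Import all_boot all_fingroup.
Set Implicit Arguments. Unset Strict Implicit. Unset Printing Implicit Defensive.
Local Open Scope group_scope.

Section SkewBrace.
Variable gT : finGroupType.
Variable circ : gT -> gT -> gT.

Definition is_skew_brace : Prop :=
  [/\ (forall a b c, circ a (circ b c) = circ (circ a b) c),
      (exists2 e, (forall a, circ e a = a /\ circ a e = a) &
                  (forall a, exists b, circ a b = e /\ circ b a = e)) &
      (forall a b c, circ a (b * c) = circ a b * a^-1 * circ a c)].

Definition lam (a b : gT) : gT := a^-1 * circ a b.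

Definition lam_orbit (x : gT) : {set gT} := [set lam a x | a : gT].

Definition bstar (a b : gT) : gT := lam a b * b^-1.

Definition A2 : {set gT} := <<[set bstar a b | a : gT, b : gT]>>.

Definition setdiff_self (X : {set gT}) : {set gT} :=
  [set u * v^-1 | u in X, v in X].
End SkewBrace.

From HB Require Import structures.
From mathcomp Require Import all_boot all_fingroup.
Set Implicit Arguments. Unset Strict Implicit. Unset Printing Implicit Defensive.
Local Open Scope group_scope.

(* The proof rests on two facts about the lambda-maps of a skew brace:
   - lambda is an action of (A,o) on A: lambda_(a o b) = lambda_a lambda_b,
     and lambda_0 = id (both from the brace axiom, after checking that the
     neutral element of (A,o) is the additive neutral 1);
   - hence every difference u - v of two elements of one orbit Lambda(x) is a
     star product: if u = lambda_a(x), v = lambda_c(x) and c' is the o-inverse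
     of c, then u - v = (a o c') * v.
   Conversely a star product a * b = lambda_a(b) - b is a difference of two
   elements of Lambda(b), and is 0 when Lambda(b) is a singleton.  So the
   generating set of A^2 and the union of the sets Lambda(x) - Lambda(x) over
   nontrivial orbits generate the same subgroup.  Finally the translate
   Lambda(x) - x lies in A^2, which bounds |Lambda(x)| by |A^2|. *)

Section SkewBraceLambda.
Variable gT : finGroupType.
Variable circ : gT -> gT -> gT.
Hypothesis sb : is_skew_brace circ.

Local Notation lam := (lam circ).
Local Notation orbit := (lam_orbit circ).

Definition stars : {set gT} := [set bstar circ a b | a : gT, b : gT].

Lemma circA a b c : circ a (circ b c) = circ (circ a b) c.
Proof. by case: sb. Qed.

Lemma circ_mulr a b c : circ a (b * c) = circ a b * a^-1 * circ a c.
Proof. by case: sb. Qed.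

(* a o 0 = a: take b = c = 0 in the brace axiom and cancel. *)
Lemma circ_x1 a : circ a 1 = a.
Proof.
have /mulgI E : circ a 1 * 1 = circ a 1 * (a^-1 * circ a 1).
  by rewrite mulgA -circ_mulr !mulg1.
by apply: (mulgI a^-1); rewrite -E mulVg.
Qed.

Lemma circ_neutral {e : gT} : (forall a, circ e a = a /\ circ a e = a) -> e = 1.
Proof. by move=> He; rewrite -[e]circ_x1; case: (He 1). Qed.

Lemma circ_1x a : circ 1 a = a.
Proof.
by case: sb => _ [e He _] _; rewrite -(circ_neutral He); case: (He a).
Qed.

Lemma circ_linv c : exists c', circ c' c = 1.
Proof.
case: sb => _ [e He Hinv] _; rewrite -(circ_neutral He).
by have [c' [_ Hc]] := Hinv c; exists c'.
Qed.

Lemma circ_invr a b : circ a b^-1 = a * (circ a b)^-1 * a.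
Proof.
have E := circ_mulr a b b^-1; rewrite mulgV circ_x1 in E.
rewrite [RHS](_ : _ = a * (circ a b)^-1 * (circ a b * a^-1 * circ a b^-1)).
  by rewrite !mulgA mulgKV mulgV mul1g.
by rewrite -E.
Qed.

Lemma lam1 x : lam 1 x = x.
Proof. by rewrite /lam invg1 mul1g circ_1x. Qed.

Lemma lamM a b x : lam (circ a b) x = lam a (lam b x).
Proof. by rewrite /lam circ_mulr circ_invr circA !mulgA mulVg mul1g mulgK. Qed.

Lemma orbit_refl x : x \in orbit x.
Proof. by apply/imsetP; exists 1; rewrite ?lam1. Qed.

Lemma lam_in_orbit a x : lam a x \in orbit x.
Proof. exact: imset_f. Qed.

Lemma orbit_diff_star x u v : u \in orbit x -> v \in orbit x ->
  u * v^-1 \in stars.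
Proof.
move=> /imsetP [a _ ->] /imsetP [c _ ->].
have [c' c'c] := circ_linv c.
apply/imset2P; exists (circ a c') (lam c x) => //.
by rewrite /bstar -lamM -circA c'c circ_x1.
Qed.

Lemma bstar_trivial a b : (#|orbit b| <= 1)%N -> bstar circ a b = 1.
Proof.
move=> triv; rewrite /bstar.
have /eqP -> : lam a b == b.
  by have := card_le1P triv _ (orbit_refl b) (lam a b); rewrite lam_in_orbit => /esym.
exact: mulgV.
Qed.

Definition orbit_diffs : {set gT} :=
  \bigcup_(x : gT | (1 < #|orbit x|)%N) setdiff_self (orbit x).

Lemma stars_sub_gen : stars \subset <<orbit_diffs>>.
Proof.
apply/subsetP => _ /imset2P [a b _ _ ->].
have [nontriv | triv] := ltnP 1 #|orbit b|; last by rewrite bstar_trivial.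
apply/mem_gen/bigcupP; exists b => //.
exact: imset2_f (lam_in_orbit a b) (orbit_refl b).
Qed.

Lemma orbit_diffs_sub_stars : orbit_diffs \subset stars.
Proof.
apply/subsetP => _ /bigcupP [x _ /imset2P [u v uin vin ->]].
by move: uin vin; apply: orbit_diff_star.
Qed.

(* The translate Lambda(x) - x lies in A^2, so |Lambda(x)| <= |A^2|. *)
Lemma card_orbit_le_A2 x : (#|orbit x| <= #|A2 circ|)%N.
Proof.
rewrite -(card_rcoset _ x^-1); apply: subset_leq_card.
apply/subsetP => _ /rcosetP [u uin ->].
exact/mem_gen/orbit_diff_star/orbit_refl.
Qed.

End SkewBraceLambda.

Theorem mainTheorem6 (gT : finGroupType) (circ : gT -> gT -> gT) :
  is_skew_brace circ ->
  A2 circ = << \bigcup_(x : gT | (1 < #|lam_orbit circ x|)%N)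
                  setdiff_self (lam_orbit circ x) >>
  /\ (forall x : gT, (1 < #|lam_orbit circ x|)%N ->
        (#|lam_orbit circ x| <= #|A2 circ|)%N).
Proof.
move=> sb; split; last by move=> x _; exact: card_orbit_le_A2 sb x.
apply/eqP; rewrite eqEsubset gen_subG (stars_sub_gen sb) /=.
exact: genS (orbit_diffs_sub_stars sb).
Qed.
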